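(* Let $(S,\mathcal C)$ be a connected connectoid and $T$ a weak normal tree of $(S,\mathcal C)$. Then a component $K\in\mathcal K(S\setminus V(T))$ has finite adhesion to $V(T)$ if and only if $N_K$ is finite.
   Context: A connectoid is given by a set $S$ and a set $\mathcal F$ of finite subsets of $S$ such that (i) $F\cup F'\in\mathcal F$ whenever $F,F'\in\mathcal F$ and $F\cap F'\neq\emptyset$, and (ii) $\emptyset\in\mathcal F$ and $\{s\}\in\mathcal F$ for every $s\in S$. A set $C\subseteq S$ is connected if for all $x,y\in C$ there is $F\in\mathcal F$ with $F\subseteq C$ and $x,y\in F$; $\mathcal C$ is the set of connected sets; $(S,\mathcal C)$ is connected if $S\in\mathcal C$. For $S'\subseteq S$, a component of $S'$ is a maximal connected subset, and $\mathcal K(S')$ is the set of components of $S'$. For $\hat S\subseteq S$, a component $K\in\mathcal K(S\setminus\hat S)$ has finite adhesion to $\hat S$ if there is a finite $X\subseteq\hat S$ with $K\in\mathcal K(S\setminus X)$. For a rooted tree $T$ with tree order $\le_T$ and $t\in V(T)$, let $\mathrm{Down}^\circ_T(t)=\{x\in V(T):x<_T t\}$ and let $K_t^T$ be the element of $\mathcal K(S\setminus\mathrm{Down}^\circ_T(t))$ containing $t$. A weak normal tree of $(S,\mathcal C)$ is a rooted undirected tree $T$ with $V(T)\subseteq S$ such that (1) for every $C\in\mathcal C$ and every two $\le_T$-incomparable $u,v\in C\cap V(T)$ there is $w\in C$ with $w\le_T u$ and $w\le_T v$, and (2) for all $u\le_T v$ in $V(T)$ there is $C\in\mathcal C$ containing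 $u,v$ with $C\cap\mathrm{Down}^\circ_T(u)=\emptyset$. For $K\in\mathcal K(S\setminus V(T))$, $N_K:=\{t\in V(T):K\subseteq K_t^T\}$. *)

From Stdlib Require Import List.
Import ListNotations.
Set Implicit Arguments.

Section Defs.
Variable S : Type.

Definition subset (A B : S -> Prop) : Prop := forall x, A x -> B x.
Definition setminus (A B : S -> Prop) : S -> Prop := fun x => A x /\ ~ B x.
Definition setU (A B : S -> Prop) : S -> Prop := fun x => A x \/ B x.
Definition setT : S -> Prop := fun _ => True.
Definition set0 : S -> Prop := fun _ => False.
Definition set1 (s : S) : S -> Prop := fun x => x = s.

Definition finite_set (A : S -> Prop) : Prop :=
  exists l : list S, forall x, A x <-> In x l.

Definition connectoid (F : (S -> Prop) -> Prop) : Prop :=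
  (forall A, F A -> finite_set A) /\
  (forall A B, F A -> F B -> (exists x, A x /\ B x) -> F (setU A B)) /\
  F set0 /\ (forall s, F (set1 s)).

Definition connected_set (F : (S -> Prop) -> Prop) (C : S -> Prop) : Prop :=
  forall x y, C x -> C y -> exists A, F A /\ subset A C /\ A x /\ A y.

Definition connected_connectoid (F : (S -> Prop) -> Prop) : Prop :=
  connectoid F /\ connected_set F setT.

Definition is_component (F : (S -> Prop) -> Prop) (S' K : S -> Prop) : Prop :=
  subset K S' /\ connected_set F K /\
  (forall K', subset K K' -> subset K' S' -> connected_set F K' -> subset K' K).

Definition finite_adhesion (F : (S -> Prop) -> Prop) (Vh K : S -> Prop) : Prop :=
  exists X, finite_set X /\ subset X Vh /\ is_component F (setminus setT X) K.

Fixpoint chain (E : S -> S -> Prop) (l : list S) : Prop :=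
  match l with
  | x :: ((y :: _) as t) => E x y /\ chain E t
  | _ => True
  end.

Definition is_path (V : S -> Prop) (E : S -> S -> Prop) (u v : S) (p : list S) : Prop :=
  (exists q, p = u :: q) /\ last p u = v /\ NoDup p /\
  (forall x, In x p -> V x) /\ chain E p.

Definition rooted_tree (V : S -> Prop) (E : S -> S -> Prop) (r : S) : Prop :=
  (forall x y, E x y -> V x /\ V y) /\
  (forall x y, E x y -> E y x) /\
  (forall x, ~ E x x) /\
  (forall u v, V u -> V v -> exists! p, is_path V E u v p) /\
  V r.

Definition tree_le (V : S -> Prop) (E : S -> S -> Prop) (r : S) (x y : S) : Prop :=
  V x /\ V y /\ exists p, is_path V E r y p /\ In x p.

Definition tree_lt V E r (x y : S) : Prop := tree_le V E r x y /\ x <> y.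

Definition down_open V E r (t : S) : S -> Prop := fun x => tree_lt V E r x t.

Definition weak_normal_tree (F : (S -> Prop) -> Prop)
    (V : S -> Prop) (E : S -> S -> Prop) (r : S) : Prop :=
  rooted_tree V E r /\
  (forall C, connected_set F C -> forall u v, C u -> C v -> V u -> V v ->
      ~ tree_le V E r u v -> ~ tree_le V E r v u ->
      exists w, C w /\ tree_le V E r w u /\ tree_le V E r w v) /\
  (forall u v, tree_le V E r u v ->
      exists C, connected_set F C /\ C u /\ C v /\
        (forall x, C x -> ~ down_open V E r u x)).

Definition N_K (F : (S -> Prop) -> Prop) V E r (K : S -> Prop) : S -> Prop :=
  fun t => V t /\ exists Kt, is_component F (setminus setT (down_open V E r t)) Kt /\
                              Kt t /\ subset K Kt.

End Defs.

(* Direction (->): if K is a component of S \ X with X a finite set of tree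
   vertices, then every t in N_K lies below some vertex of X (otherwise the
   component K_t^T would avoid X and, containing K, would equal K, yet t is a
   vertex); and the down-closure of a finite set of vertices is finite.
   Direction (<-): K is a component of S \ N_K.  A connected K' between K and
   S \ N_K that meets V(T) has a minimal vertex t; K' avoids Down°(t), so K_t^T
   contains K' and hence K, i.e. t lies in N_K, which K' was supposed to miss. *)

From Stdlib Require Import List Classical.
Import ListNotations.
Set Implicit Arguments.

Section Finiteness.
Variable S : Type.

Lemma finite_set_subset (A B : S -> Prop) :
  subset A B -> finite_set B -> finite_set A.
Proof.
  intros HAB [l Hl].
  assert (Hfilter : forall l0, exists l', forall x, (A x /\ In x l0) <-> In x l').
  { induction l0 as [|a l0 [l' IH]].
    - exists nil. intros x; simpl; tauto.
    - destruct (classic (A a)) as [Aa|nAa].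
      + exists (a :: l'). intros x; simpl. rewrite <- IH.
        split; [intros [Ax [->|Hx]]; auto | intros [<-|[Ax Hx]]; auto].
      + exists l'. intros x; simpl. rewrite <- IH.
        split; [intros [Ax [->|Hx]]; [contradiction|auto] | intros [Ax Hx]; auto]. }
  destruct (Hfilter l) as [l' Hl']. exists l'. intros x. rewrite <- Hl'.
  split; [intros Ax; split; [exact Ax | apply Hl, HAB, Ax] | tauto].
Qed.

End Finiteness.

Section Paths.
Variable S : Type.
Variable E : S -> S -> Prop.

Lemma chain_app_l (a b : list S) : chain E (a ++ b) -> chain E a.
Proof.
  induction a as [|x a IH]; [simpl; auto|].
  destruct a as [|y a']; [simpl; auto|].
  intros [Hxy Hch]. split; auto.
Qed.

Lemma in_last_cons (q : list S) (x d : S) : In (last (x :: q) d) (x :: q).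
Proof.
  revert x. induction q as [|y q IH]; intros x; [left; reflexivity|].
  right. apply IH.
Qed.

Lemma is_path_prefix (V : S -> Prop) (u v t : S) (a b : list S) :
  is_path V E u v (a ++ t :: b) -> is_path V E u t (a ++ [t]).
Proof.
  intros [[q Hq] [_ [Hnd [HV Hch]]]].
  replace (a ++ t :: b) with ((a ++ [t]) ++ b) in Hnd, HV, Hch
    by (rewrite <- app_assoc; reflexivity).
  split; [|split; [apply last_last|split; [|split]]].
  - destruct a as [|y a']; injection Hq; intros; subst; [exists nil | exists (a' ++ [t])];
      reflexivity.
  - eapply NoDup_app_remove_r; eauto.
  - intros x Hx. apply HV, in_or_app; left; exact Hx.
  - eapply chain_app_l; eauto.
Qed.

Lemma first_in_list (P : S -> Prop) (l : list S) :
  (exists z, In z l /\ P z) ->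
  exists a t b, l = a ++ t :: b /\ P t /\ forall z, In z a -> ~ P z.
Proof.
  induction l as [|x l IH]; intros [z [Hz Pz]]; [destruct Hz|].
  destruct (classic (P x)) as [Px|nPx].
  - exists nil, x, l. split; [reflexivity|]. split; [exact Px|]. intros _ [].
  - destruct Hz as [->|Hz]; [contradiction|].
    destruct IH as [a [t [b [Heq [Pt Ha]]]]]; [exists z; auto|].
    exists (x :: a), t, b. rewrite Heq. split; [reflexivity|]. split; [exact Pt|].
    intros w [<-|Hw]; auto.
Qed.

End Paths.

Section RootedTree.
Variable S : Type.
Variables (V : S -> Prop) (E : S -> S -> Prop) (r : S).
Hypothesis tree : rooted_tree V E r.

Lemma root_path_exists (v : S) : V v -> exists p, is_path V E r v p.
Proof.
  intros Vv. destruct tree as [_ [_ [_ [Hpath Vr]]]].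
  destruct (Hpath r v Vr Vv) as [p [Hp _]]. exists p; exact Hp.
Qed.

Lemma tree_le_in_root_path (x v : S) (p : list S) :
  is_path V E r v p -> tree_le V E r x v -> In x p.
Proof.
  intros Hp [_ [Vv [q [Hq Hxq]]]].
  destruct tree as [_ [_ [_ [Hpath Vr]]]].
  destruct (Hpath r v Vr Vv) as [p0 [_ Huniq]].
  rewrite <- (Huniq q Hq), (Huniq p Hp) in Hxq. exact Hxq.
Qed.

Lemma finite_down_closure (X : S -> Prop) :
  finite_set X -> subset X V ->
  finite_set (fun t => exists x, X x /\ tree_le V E r t x).
Proof.
  intros [lx Hlx] HXV.
  assert (Hcover : forall l0, (forall x, In x l0 -> V x) ->
            exists l, forall t x, In x l0 -> tree_le V E r t x -> In t l).
  { induction l0 as [|a l0 IH]; intros Hsub.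
    - exists nil. intros t x [].
    - destruct IH as [l Hl]; [intros x Hx; apply Hsub; right; exact Hx|].
      destruct (root_path_exists (Hsub a (or_introl eq_refl))) as [pa Hpa].
      exists (pa ++ l). intros t x [<-|Hin] Hle; apply in_or_app.
      + left. exact (tree_le_in_root_path Hpa Hle).
      + right. eapply Hl; eauto. }
  destruct (Hcover lx) as [l Hl]; [intros x Hx; apply HXV, Hlx, Hx|].
  apply (finite_set_subset (B := fun t => In t l)); [|exists l; tauto].
  intros t [x [Xx Hle]]. eapply Hl; [apply Hlx, Xx | exact Hle].
Qed.

Lemma exists_minimal_vertex (C : S -> Prop) :
  (exists v, C v /\ V v) ->
  exists t, C t /\ V t /\ forall y, C y -> ~ down_open V E r t y.
Proof.
  intros [v [Cv Vv]].
  destruct (root_path_exists Vv) as [pv Hpv].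
  assert (Hin : exists z, In z pv /\ C z).
  { exists v. split; [|exact Cv].
    destruct Hpv as [[q ->] [Hlast _]]. rewrite <- Hlast. apply in_last_cons. }
  destruct (first_in_list C pv Hin) as [a [t [b [-> [Ct Ha]]]]].
  assert (Hpt := is_path_prefix t a b Hpv).
  exists t. split; [exact Ct|]. split.
  { destruct Hpv as [_ [_ [_ [HV _]]]]. apply HV, in_or_app; right; left; reflexivity. }
  intros y Cy [Hle Hne].
  destruct (in_app_or _ _ _ (tree_le_in_root_path Hpt Hle)) as [Hya|[Hyt|[]]].
  - exact (Ha y Hya Cy).
  - exact (Hne (eq_sym Hyt)).
Qed.

End RootedTree.

Section Connectoid.
Variable S : Type.
Variable F : (S -> Prop) -> Prop.
Hypothesis HF : connectoid F.

(* The component is the union of all connected subsets of S' through t. *)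
Lemma component_exists (S' : S -> Prop) (t : S) :
  S' t -> exists Kt, is_component F S' Kt /\ Kt t /\
    (forall C, connected_set F C -> subset C S' -> C t -> subset C Kt).
Proof.
  intros St. destruct HF as [_ [Hunion [_ Hsingle]]].
  set (Kt := fun x => exists C, connected_set F C /\ subset C S' /\ C t /\ C x).
  assert (Kt_t : Kt t).
  { exists (set1 t). split; [|split; [|split; reflexivity]].
    - intros x y -> ->. exists (set1 t).
      split; [apply Hsingle|]. split; [intros z Hz; exact Hz|]. split; reflexivity.
    - intros z ->. exact St. }
  exists Kt. split; [|split; [exact Kt_t|intros C HC HCS Ct x Cx; exists C; auto]].
  split; [|split].
  - intros x [C [_ [HCS [_ Cx]]]]. apply HCS, Cx.
  - intros x y [C1 [HC1 [HCS1 [Ct1 Cx1]]]] [C2 [HC2 [HCS2 [Ct2 Cy2]]]].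
    destruct (HC1 x t Cx1 Ct1) as [A1 [HA1 [Hs1 [A1x A1t]]]].
    destruct (HC2 t y Ct2 Cy2) as [A2 [HA2 [Hs2 [A2t A2y]]]].
    exists (setU A1 A2). split; [apply Hunion; auto; exists t; auto|].
    split; [|split; [left; exact A1x | right; exact A2y]].
    intros z [Hz|Hz]; [exists C1 | exists C2]; repeat split; auto.
  - intros K' HK' HK'S HK'c x K'x. exists K'. repeat split; auto.
Qed.

Lemma N_K_of_connected_above (V : S -> Prop) (E : S -> S -> Prop) (r : S)
    (K C : S -> Prop) (t : S) :
  connected_set F C -> C t -> V t -> (forall y, C y -> ~ down_open V E r t y) ->
  subset K C -> N_K F V E r K t.
Proof.
  intros HC Ct Vt Habove HKC.
  assert (Ht : setminus (@setT S) (down_open V E r t) t).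
  { split; [exact I|]. intros [_ Hne]. exact (Hne eq_refl). }
  destruct (component_exists _ _ Ht) as [Kt [HKt [Ktt HKtmax]]].
  split; [exact Vt|]. exists Kt. split; [exact HKt|]. split; [exact Ktt|].
  intros x Kx. apply (HKtmax C HC); [|exact Ct|apply HKC, Kx].
  intros y Cy. split; [exact I|]. exact (Habove y Cy).
Qed.

End Connectoid.

Section WeakNormalTree.
Variable S : Type.
Variable F : (S -> Prop) -> Prop.
Variables (V : S -> Prop) (E : S -> S -> Prop) (r : S).
Hypothesis HT : weak_normal_tree F V E r.

(* By property (1) of weak normal trees, a connected set above t containing t
   and a vertex x has a common lower bound of t and x, which must be t. *)
Lemma tree_le_of_connected_above (C : S -> Prop) (t x : S) :
  connected_set F C -> C t -> V t -> (forall y, C y -> ~ down_open V E r t y) ->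
  C x -> V x -> tree_le V E r t x.
Proof.
  intros HC Ct Vt Habove Cx Vx.
  destruct HT as [_ [Hlower _]].
  assert (Hnot_below : forall y, C y -> tree_le V E r y t -> y = t).
  { intros y Cy Hle. apply NNPP. intros Hne. exact (Habove y Cy (conj Hle Hne)). }
  apply NNPP. intros Hnle.
  assert (Hnge : ~ tree_le V E r x t)
    by (intros Hle; pose proof (Hnot_below x Cx Hle) as ->; exact (Hnle Hle)).
  destruct (Hlower C HC t x Ct Cx Vt Vx Hnle Hnge) as [w [Cw [Hwt Hwx]]].
  rewrite (Hnot_below w Cw Hwt) in Hwx. exact (Hnle Hwx).
Qed.

Lemma N_K_below_separator (K X : S -> Prop) (t : S) :
  subset K (setminus (@setT S) V) -> subset X V ->
  is_component F (setminus (@setT S) X) K ->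
  N_K F V E r K t -> exists x, X x /\ tree_le V E r t x.
Proof.
  intros HKV HXV [_ [_ HKmax]] [Vt [Kt [[HKtD [HKtc _]] [Ktt HKKt]]]].
  apply NNPP. intros Hnone.
  assert (HKtX : subset Kt (setminus (@setT S) X)).
  { intros x Ktx. split; [exact I|]. intros Xx. apply Hnone. exists x. split; [exact Xx|].
    apply (tree_le_of_connected_above HKtc Ktt Vt); [|exact Ktx|exact (HXV x Xx)].
    intros y Kty. exact (proj2 (HKtD y Kty)). }
  exact (proj2 (HKV t (HKmax Kt HKKt HKtX HKtc t Ktt)) Vt).
Qed.

Lemma component_of_complement_N_K (K : S -> Prop) :
  connectoid F -> is_component F (setminus (@setT S) V) K ->
  is_component F (setminus (@setT S) (N_K F V E r K)) K.
Proof.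
  intros HF [HKV [HKc HKmax]].
  split; [|split; [exact HKc|]].
  { intros x Kx. split; [exact I|]. intros [Vx _]. exact (proj2 (HKV x Kx) Vx). }
  intros K' HKK' HK'N HK'c.
  destruct (classic (exists v, K' v /\ V v)) as [Hmeet|Hnone].
  - destruct HT as [Htree _].
    destruct (exists_minimal_vertex Htree K' Hmeet) as [t [K't [Vt Habove]]].
    exfalso. apply (proj2 (HK'N t K't)).
    exact (N_K_of_connected_above HF HK'c K't Vt Habove HKK').
  - apply HKmax; [exact HKK'| |exact HK'c].
    intros x K'x. split; [exact I|]. intros Vx. apply Hnone. exists x; auto.
Qed.

End WeakNormalTree.

Theorem proposition6p2 (S : Type) (F : (S -> Prop) -> Prop)
  (V : S -> Prop) (E : S -> S -> Prop) (r : S) (K : S -> Prop) :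
  connected_connectoid F ->
  weak_normal_tree F V E r ->
  is_component F (setminus (@setT S) V) K ->
  (finite_adhesion F V K <-> finite_set (N_K F V E r K)).
Proof.
  intros [HF _] HT HK. split.
  - intros [X [HXfin [HXV HKX]]].
    apply (finite_set_subset (B := fun t => exists x, X x /\ tree_le V E r t x)).
    + intros t Ht. exact (N_K_below_separator HT (proj1 HK) HXV HKX Ht).
    + exact (finite_down_closure (proj1 HT) HXfin HXV).
  - intros HNfin. exists (N_K F V E r K).
    split; [exact HNfin|]. split; [intros t [Vt _]; exact Vt|].
    exact (component_of_complement_N_K HT HF HK).
Qed.
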